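(* Let $H$ be a Hilbert space and $W(\cdot)$ denote numerical range. (i) For $T,S\in\mathcal{L}(H)$, $\mathfrak{d}(\overline{W(T)},\overline{W(S)})\le\|T-S\|$. (ii) If $H_1\subset H_2\subset\cdots\subset H$ are nonzero closed subspaces with $\overline{\bigcup_nH_n}=H$, then for every $T\in\mathcal{L}(H)$, $\overline{W(T)}=\overline{\bigcup_nW(P_{H_n}T|_{H_n})}$; in particular $\mathfrak{d}(\overline{W(P_{H_n}T|_{H_n})},\overline{W(T)})\to0$. (iii) If $T\in\mathcal{L}(H)$ and $P,Q$ are nonzero orthogonal projections on $H$ with $\|P-Q\|<1$, then \[ \mathfrak{d}\big(\overline{W(PTP|_{PH})},\overline{W(QTQ|_{QH})}\big)\le\|T\|\,\|P-Q\|\Big[1+\frac{2}{(1-\|P-Q\|)^2}\Big]. \] In particular, if $P_n,P$ are nonzero orthogonal projections with $\|P_n-P\|\to0$, then $\mathfrak{d}(\overline{W(P_nTP_n|_{P_nH})},\overline{W(PTP|_{PH})})\to0$.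
   Context: The numerical range of $T\in\mathcal{L}(H)$ is $W(T)=\{\langle Tx,x\rangle:\|x\|=1\}$. $\mathfrak{d}$ denotes the Hausdorff distance between nonempty compact subsets of $\mathbb{C}$. *)

From Stdlib Require Import Reals Lra Classical ClassicalDescription.
Open Scope R_scope.

Definition C : Type := (R * R)%type.
Definition RtoC (r : R) : C := (r, 0).
Definition C0 : C := (0, 0).
Definition C1 : C := (1, 0).
Definition Cre (z : C) : R := fst z.
Definition Cim (z : C) : R := snd z.
Definition Cadd (z w : C) : C := (fst z + fst w, snd z + snd w).
Definition Copp (z : C) : C := (- fst z, - snd z).
Definition Csub (z w : C) : C := Cadd z (Copp w).
Definition Cmul (z w : C) : C :=
  (fst z * fst w - snd z * snd w, fst z * snd w + snd z * fst w).
Definition Cconj (z : C) : C := (fst z, - snd z).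
Definition Cmod (z : C) : R := sqrt (fst z ^ 2 + snd z ^ 2).

Record Hilbert := {
  hcar :> Type;
  vzero : hcar;
  vadd : hcar -> hcar -> hcar;
  vopp : hcar -> hcar;
  vscal : C -> hcar -> hcar;
  inner : hcar -> hcar -> C;
  vadd_assoc : forall x y z, vadd x (vadd y z) = vadd (vadd x y) z;
  vadd_comm : forall x y, vadd x y = vadd y x;
  vadd_0 : forall x, vadd x vzero = x;
  vadd_opp : forall x, vadd x (vopp x) = vzero;
  vscal_1 : forall x, vscal C1 x = x;
  vscal_assoc : forall a b x, vscal a (vscal b x) = vscal (Cmul a b) x;
  vscal_addC : forall a b x, vscal (Cadd a b) x = vadd (vscal a x) (vscal b x);
  vscal_addV : forall a x y, vscal a (vadd x y) = vadd (vscal a x) (vscal a y);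
  inner_add_l : forall x y z, inner (vadd x y) z = Cadd (inner x z) (inner y z);
  inner_scal_l : forall a x y, inner (vscal a x) y = Cmul a (inner x y);
  inner_sym : forall x y, inner y x = Cconj (inner x y);
  inner_pos : forall x, 0 <= Cre (inner x x);
  inner_def : forall x, inner x x = C0 -> x = vzero;
  hcomplete : forall u : nat -> hcar,
    (forall eps, eps > 0 -> exists N, forall m n, (m >= N)%nat -> (n >= N)%nat ->
       sqrt (Cre (inner (vadd (u m) (vopp (u n))) (vadd (u m) (vopp (u n))))) < eps) ->
    exists l, forall eps, eps > 0 -> exists N, forall n, (n >= N)%nat ->
       sqrt (Cre (inner (vadd (u n) (vopp l)) (vadd (u n) (vopp l)))) < eps
}.

Arguments vzero {h}.
Arguments vadd {h}.
Arguments vopp {h}.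
Arguments vscal {h}.
Arguments inner {h}.

Definition vsub {H : Hilbert} (x y : H) : H := vadd x (vopp y).
Definition vnorm {H : Hilbert} (x : H) : R := sqrt (Cre (inner x x)).

Definition Rsup (E : R -> Prop) : R :=
  match excluded_middle_informative (bound E /\ exists x, E x) with
  | left h => proj1_sig (completeness E (proj1 h) (proj2 h))
  | right _ => 0
  end.
Definition Rinf (E : R -> Prop) : R := - Rsup (fun r => E (- r)).

Definition linear_op {H : Hilbert} (T : H -> H) : Prop :=
  (forall x y, T (vadd x y) = vadd (T x) (T y)) /\
  (forall a x, T (vscal a x) = vscal a (T x)).

Definition bounded_op {H : Hilbert} (T : H -> H) : Prop :=
  linear_op T /\ exists c, forall x, vnorm (T x) <= c * vnorm x.

Definition op_sub {H : Hilbert} (T S : H -> H) : H -> H := fun x => vsub (T x) (S x).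

Definition opnorm {H : Hilbert} (T : H -> H) : R :=
  Rsup (fun r => exists x : H, vnorm x <= 1 /\ r = vnorm (T x)).

Definition orth_proj {H : Hilbert} (P : H -> H) : Prop :=
  bounded_op P /\ (forall x, P (P x) = P x) /\
  (forall x y, inner (P x) y = inner x (P y)).

Definition nonzero_op {H : Hilbert} (P : H -> H) : Prop := exists x, P x <> vzero.

Definition closed_subspace {H : Hilbert} (M : H -> Prop) : Prop :=
  M vzero /\ (forall x y, M x -> M y -> M (vadd x y)) /\
  (forall a x, M x -> M (vscal a x)) /\
  (forall (u : nat -> H) l, (forall n, M (u n)) ->
     (forall eps, eps > 0 -> exists N, forall n, (n >= N)%nat -> vnorm (vsub (u n) l) < eps) ->
     M l).

Definition nonzero_subspace {H : Hilbert} (M : H -> Prop) : Prop :=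
  exists x, M x /\ x <> vzero.

Definition orth_proj_onto {H : Hilbert} (M : H -> Prop) (P : H -> H) : Prop :=
  orth_proj P /\ (forall y, M y <-> exists x, y = P x).

Definition numrange {H : Hilbert} (T : H -> H) : C -> Prop :=
  fun z => exists x : H, vnorm x = 1 /\ z = inner (T x) x.

(* numerical range of an operator A on the subspace M (A M ⊆ M), viewed as an
   operator on the Hilbert space M with the inherited inner product:
   W(A|_M) = { <Ax,x> : x ∈ M, ||x|| = 1 } *)
Definition numrange_on {H : Hilbert} (M : H -> Prop) (A : H -> H) : C -> Prop :=
  fun z => exists x : H, M x /\ vnorm x = 1 /\ z = inner (A x) x.

Definition range {H : Hilbert} (P : H -> H) : H -> Prop := fun y => exists x, y = P x.

Definition closure (A : C -> Prop) : C -> Prop :=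
  fun z => forall eps, eps > 0 -> exists a, A a /\ Cmod (Csub z a) < eps.

Definition dist_pt_set (z : C) (B : C -> Prop) : R :=
  Rinf (fun r => exists b, B b /\ r = Cmod (Csub z b)).

Definition hausdorff (A B : C -> Prop) : R :=
  Rmax (Rsup (fun r => exists a, A a /\ r = dist_pt_set a B))
       (Rsup (fun r => exists b, B b /\ r = dist_pt_set b A)).

(* The quadratic form [x |-> <Tx,x>] is Lipschitz on the unit sphere,
   [|<Tx,x> - <Ty,y>| <= |T| |x - y| (|x| + |y|)], so the numerical ranges of [T] over two
   sets of unit vectors are Hausdorff-close as soon as every unit vector of either set is
   close to one of the other; compressing [T] by a projection fixing [x] does not change
   [<Tx,x>].  Part (i) is the pointwise bound [|<(T - S)x,x>| <= |T - S|].  For (ii), a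
   unit vector is approximated by the normalisation of a nearby vector of some [H_n]; the
   Hausdorff distances then tend to [0] because [W(T)] lies in the disc of radius [|T|],
   which has finite nets.  For (iii), with [d = |P - Q|] and a unit [x] in [PH], Pythagoras
   gives [1 - |Qx|^2 = |x - Qx|^2 <= d^2], so [Qx / |Qx|] is a unit vector of [QH] within
   [d + d^2] of [x], and [2 (d + d^2) <= d (1 + 2 / (1 - d)^2)]. *)

From Pilot Require Import Defs.
From Stdlib Require Import Reals Lra Psatz Classical ClassicalDescription Arith Lia List.
Open Scope R_scope.

(* [Reals] exports binomial coefficients [C] and [C1], which shadow the complex numbers
   of [Defs]; hence the qualified names [Defs.C] and [Defs.C1]. *)

Lemma le_of_sq_le (x y : R) : 0 <= y -> x * x <= y * y -> x <= y.
Proof. intros. nra. Qed.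

Lemma abs_le_inv a b : Rabs a <= b -> -b <= a <= b.
Proof.
  intros. pose proof (Rle_abs a). pose proof (Rle_abs (-a)). rewrite Rabs_Ropp in *. lra.
Qed.

(* [Rsup] returns the junk value [0] on sets that are empty or unbounded, hence the
   hypothesis [0 <= K]. *)
Lemma Rsup_le (E : R -> Prop) K : 0 <= K -> (forall r, E r -> r <= K) -> Rsup E <= K.
Proof.
  intros HK HE. unfold Rsup. destruct excluded_middle_informative as [h|h]; [|lra].
  destruct (completeness E _ _) as [m Hm]. simpl. apply (proj2 Hm). intros r Hr. now apply HE.
Qed.

Lemma Rsup_ge (E : R -> Prop) r : E r -> (exists M, forall x, E x -> x <= M) -> r <= Rsup E.
Proof.
  intros Hr [M HM]. unfold Rsup. destruct excluded_middle_informative as [h|h].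
  - destruct (completeness E _ _) as [m Hm]. simpl. now apply (proj1 Hm).
  - exfalso. apply h. split; [exists M; intros x Hx; now apply HM | now exists r].
Qed.

Lemma Rsup_nonneg (E : R -> Prop) : (forall x, E x -> 0 <= x) -> 0 <= Rsup E.
Proof.
  intros HE. unfold Rsup. destruct excluded_middle_informative as [h|h]; [|lra].
  destruct (completeness E _ _) as [m Hm]. simpl.
  destruct h as [_ [x Hx]]. apply Rle_trans with x; [now apply HE | now apply (proj1 Hm)].
Qed.

Lemma Rinf_le (E : R -> Prop) r : E r -> (forall x, E x -> 0 <= x) -> Rinf E <= r.
Proof.
  intros Hr HE. unfold Rinf.
  assert (- r <= Rsup (fun r0 => E (- r0))); [|lra].
  apply Rsup_ge; [now rewrite Ropp_involutive|].
  exists 0. intros x Hx. apply HE in Hx. lra.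
Qed.

Lemma Rinf_nonneg (E : R -> Prop) : (forall x, E x -> 0 <= x) -> 0 <= Rinf E.
Proof.
  intros HE. unfold Rinf.
  assert (Rsup (fun r0 => E (- r0)) <= 0); [|lra].
  apply Rsup_le; [lra|]. intros x Hx. apply HE in Hx. lra.
Qed.

Lemma Cmod_nonneg z : 0 <= Cmod z.
Proof. apply sqrt_pos. Qed.

Lemma Cmod_sq z : Cmod z * Cmod z = fst z ^ 2 + snd z ^ 2.
Proof. unfold Cmod. apply sqrt_sqrt. nra. Qed.

Lemma Cmod_le_of_sq z r : 0 <= r -> fst z ^ 2 + snd z ^ 2 <= r * r -> Cmod z <= r.
Proof. intros. apply le_of_sq_le; auto. rewrite Cmod_sq. lra. Qed.

Lemma Cmod_real r : Cmod (r, 0) = Rabs r.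
Proof. unfold Cmod; simpl. rewrite <- sqrt_Rsqr_abs. f_equal. unfold Rsqr. ring. Qed.

Lemma Cmod_triangle a b : Cmod (Cadd a b) <= Cmod a + Cmod b.
Proof.
  destruct a as [a1 a2], b as [b1 b2]. unfold Cadd; simpl.
  pose proof (Cmod_sq (a1, a2)) as Ha. pose proof (Cmod_sq (b1, b2)) as Hb.
  pose proof (Cmod_nonneg (a1, a2)). pose proof (Cmod_nonneg (b1, b2)).
  simpl in *. set (sa := Cmod (a1, a2)) in *. set (sb := Cmod (b1, b2)) in *.
  assert (a1 * b1 + a2 * b2 <= sa * sb).
  { destruct (Rle_dec (a1 * b1 + a2 * b2) 0); [nra|]. apply le_of_sq_le; [nra|].
    replace (sa * sb * (sa * sb)) with ((sa * sa) * (sb * sb)) by ring. rewrite Ha, Hb.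
    pose proof (pow2_ge_0 (a1 * b2 - a2 * b1)). nra. }
  apply Cmod_le_of_sq; simpl; nra.
Qed.

Lemma Cmod_sub_sym a b : Cmod (Csub a b) = Cmod (Csub b a).
Proof. destruct a, b. unfold Cmod, Csub, Cadd, Copp; simpl. f_equal. ring. Qed.

Lemma Cmod_sub_triangle a b c : Cmod (Csub a c) <= Cmod (Csub a b) + Cmod (Csub b c).
Proof.
  replace (Csub a c) with (Cadd (Csub a b) (Csub b c)); [apply Cmod_triangle|].
  destruct a, b, c. unfold Csub, Cadd, Copp; simpl. f_equal; ring.
Qed.

Lemma Cmod_sub_diag z : Cmod (Csub z z) = 0.
Proof. destruct z. unfold Cmod, Csub, Cadd, Copp; simpl. rewrite <- sqrt_0. f_equal. ring. Qed.

Lemma Cmod_bounds_parts z : Rabs (fst z) <= Cmod z /\ Rabs (snd z) <= Cmod z.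
Proof.
  destruct z as [a b]. pose proof (Cmod_sq (a, b)). pose proof (Cmod_nonneg (a, b)).
  simpl in *. split; apply Rabs_le; split; nra.
Qed.

Lemma Cmod_le_parts z : Cmod z <= Rabs (fst z) + Rabs (snd z).
Proof.
  destruct z as [a b]. pose proof (Rabs_pos a); pose proof (Rabs_pos b).
  pose proof (Rsqr_abs a); pose proof (Rsqr_abs b). unfold Rsqr in *.
  apply Cmod_le_of_sq; simpl; nra.
Qed.

Lemma small_radius (K eps : R) : 0 <= K -> eps > 0 ->
  exists r, 0 < r <= 1 / 2 /\ r * (4 * K + 1) <= eps.
Proof.
  intros HK He. exists (Rmin (1 / 2) (eps / (4 * K + 1))). repeat split.
  - apply Rmin_glb_lt; [lra | apply Rdiv_lt_0_compat; lra].
  - apply Rmin_l.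
  - pose proof (Rmin_r (1 / 2) (eps / (4 * K + 1))) as Hr.
    apply Rmult_le_compat_r with (r := 4 * K + 1) in Hr; [|lra].
    replace (eps / (4 * K + 1) * (4 * K + 1)) with eps in Hr by (field; lra). exact Hr.
Qed.

Arguments vadd_assoc {h}. Arguments vadd_comm {h}. Arguments vadd_0 {h}.
Arguments vadd_opp {h}. Arguments vscal_1 {h}. Arguments vscal_assoc {h}.
Arguments vscal_addC {h}. Arguments vscal_addV {h}. Arguments inner_add_l {h}.
Arguments inner_scal_l {h}. Arguments inner_sym {h}. Arguments inner_pos {h}.
Arguments inner_def {h}.

Section Hilbert_space.
Context {H : Hilbert}.
Implicit Types x y z : H.

Lemma vadd_0_l x : vadd vzero x = x.
Proof. rewrite vadd_comm. apply vadd_0. Qed.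

Lemma vadd_cancel x y z : vadd x y = vadd x z -> y = z.
Proof.
  intros E. rewrite <- (vadd_0_l y), <- (vadd_0_l z), <- (vadd_opp x), (vadd_comm x).
  rewrite <- !vadd_assoc, E. reflexivity.
Qed.

Lemma vscal_0 x : vscal C0 x = vzero.
Proof.
  apply (vadd_cancel (vscal C0 x)). rewrite vadd_0, <- vscal_addC.
  f_equal. unfold Cadd, C0; simpl; f_equal; ring.
Qed.

Lemma vopp_scal x : vopp x = vscal (-1, 0) x.
Proof.
  apply (vadd_cancel x). rewrite vadd_opp, <- (vscal_1 x) at 1.
  rewrite <- vscal_addC, <- (vscal_0 x). f_equal. unfold Cadd, Defs.C1, C0; simpl; f_equal; ring.
Qed.

Lemma vopp_0 : vopp (@vzero H) = vzero.
Proof. pose proof (vadd_opp (@vzero H)) as E. now rewrite vadd_0_l in E. Qed.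

Lemma vsub_0 x : vsub x vzero = x.
Proof. unfold vsub. rewrite vopp_0. apply vadd_0. Qed.

Lemma vsub_add x y z : vadd (vsub x y) (vsub y z) = vsub x z.
Proof.
  unfold vsub. rewrite vadd_assoc. f_equal.
  rewrite <- vadd_assoc, (vadd_comm (vopp y)), vadd_opp, vadd_0. reflexivity.
Qed.

Lemma vsub_anti x y : vsub y x = vopp (vsub x y).
Proof. apply (vadd_cancel (vsub x y)). rewrite vadd_opp, vsub_add. apply vadd_opp. Qed.

Lemma vscal_subl a b x : vscal (Csub a b) x = vsub (vscal a x) (vscal b x).
Proof.
  unfold vsub, Csub. rewrite vscal_addC, vopp_scal, vscal_assoc. do 2 f_equal.
  destruct b; unfold Cmul, Copp; simpl; f_equal; ring.
Qed.

Lemma inner_0_l y : inner vzero y = C0.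
Proof. rewrite <- (vscal_0 vzero), inner_scal_l. unfold Cmul, C0; simpl; f_equal; ring. Qed.

Lemma inner_0_r y : inner y vzero = C0.
Proof. rewrite inner_sym, inner_0_l. unfold Cconj, C0; simpl; f_equal; ring. Qed.

Lemma inner_add_r x y z : inner z (vadd x y) = Cadd (inner z x) (inner z y).
Proof.
  rewrite inner_sym, inner_add_l, (inner_sym z x), (inner_sym z y).
  destruct (inner z x), (inner z y); unfold Cconj, Cadd; simpl; f_equal; ring.
Qed.

Lemma inner_scal_r a x y : inner x (vscal a y) = Cmul (Cconj a) (inner x y).
Proof.
  rewrite inner_sym, inner_scal_l, (inner_sym y x).
  destruct a, (inner x y); unfold Cconj, Cmul; simpl; f_equal; ring.
Qed.

Lemma inner_sub_l x y z : inner (vsub x y) z = Csub (inner x z) (inner y z).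
Proof.
  unfold vsub, Csub. rewrite inner_add_l, vopp_scal, inner_scal_l.
  destruct (inner y z); unfold Cmul, Copp; simpl; do 2 f_equal; ring.
Qed.

Lemma inner_sub_r x y z : inner z (vsub x y) = Csub (inner z x) (inner z y).
Proof.
  unfold vsub, Csub. rewrite inner_add_r, vopp_scal, inner_scal_r.
  destruct (inner z y); unfold Cmul, Copp, Cconj; simpl; do 2 f_equal; ring.
Qed.

Lemma inner_diag_real x : snd (inner x x) = 0.
Proof.
  pose proof (inner_sym x x) as E. destruct (inner x x) as [a b].
  unfold Cconj in E. simpl in *. injection E. lra.
Qed.

Lemma vnorm_nonneg x : 0 <= vnorm x.
Proof. apply sqrt_pos. Qed.

Lemma vnorm_sq x : vnorm x * vnorm x = fst (inner x x).
Proof. apply sqrt_sqrt, inner_pos. Qed.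

Lemma vnorm_le_of_sq x r : 0 <= r -> fst (inner x x) <= r * r -> vnorm x <= r.
Proof. intros. apply le_of_sq_le; auto. rewrite vnorm_sq. lra. Qed.

Lemma vnorm_eq0 x : vnorm x = 0 -> x = vzero.
Proof.
  intros E. apply inner_def. pose proof (vnorm_sq x) as Hsq. rewrite E in Hsq.
  pose proof (inner_diag_real x). destruct (inner x x); simpl in *. unfold C0. f_equal; lra.
Qed.

Lemma vnorm_0 : vnorm (@vzero H) = 0.
Proof. unfold vnorm. rewrite inner_0_l. apply sqrt_0. Qed.

Lemma vnorm_gt0 x : x <> vzero -> 0 < vnorm x.
Proof.
  intros Hx. destruct (vnorm_nonneg x) as [|E]; auto.
  exfalso. apply Hx, vnorm_eq0. auto.
Qed.

Lemma inner_expand x y s :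
  fst (inner (vadd x (vscal s y)) (vadd x (vscal s y))) =
  fst (inner x x) + 2 * (fst s * fst (inner x y) + snd s * snd (inner x y)) +
  (fst s ^ 2 + snd s ^ 2) * fst (inner y y).
Proof.
  rewrite !inner_add_l, !inner_add_r, !inner_scal_l, !inner_scal_r, (inner_sym y x).
  pose proof (inner_diag_real y). destruct (inner y y) as [b b']. simpl in *. subst b'.
  destruct s as [u v], (inner x y) as [p q], (inner x x) as [a a'].
  unfold Cadd, Cmul, Cconj; simpl. ring.
Qed.

(* Expanding [0 <= |x + s y|^2] at the minimiser [s = - <x,y> / |y|^2]. *)
Lemma cauchy_schwarz x y : Cmod (inner x y) <= vnorm x * vnorm y.
Proof.
  destruct (classic (y = vzero)) as [->|Hy].
  { rewrite inner_0_r, vnorm_0, Rmult_0_r. unfold C0. rewrite Cmod_real, Rabs_R0. lra. }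
  pose proof (vnorm_gt0 y Hy) as Hny. pose proof (vnorm_sq y) as Hsq.
  set (b := fst (inner y y)) in *. assert (Hb : 0 < b) by nra.
  set (p := fst (inner x y)). set (q := snd (inner x y)).
  pose proof (inner_pos (vadd x (vscal (- p / b, - q / b) y))) as P.
  unfold Cre in P. rewrite inner_expand in P. cbn [fst snd] in P. fold p q b in P.
  replace (fst (inner x x) + 2 * (- p / b * p + - q / b * q) + ((- p / b) ^ 2 + (- q / b) ^ 2) * b)
    with ((fst (inner x x) * b - (p ^ 2 + q ^ 2)) / b) in P by (field; lra).
  assert (Hpq : p ^ 2 + q ^ 2 <= fst (inner x x) * b).
  { apply Rmult_le_compat_r with (r := b) in P; [|lra].
    replace ((fst (inner x x) * b - (p ^ 2 + q ^ 2)) / b * b)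
      with (fst (inner x x) * b - (p ^ 2 + q ^ 2)) in P by (field; lra). lra. }
  apply Cmod_le_of_sq; [pose proof (vnorm_nonneg x); nra|].
  replace (vnorm x * vnorm y * (vnorm x * vnorm y)) with ((vnorm x * vnorm x) * (vnorm y * vnorm y))
    by ring.
  rewrite vnorm_sq, Hsq. exact Hpq.
Qed.

Lemma vnorm_triangle x y : vnorm (vadd x y) <= vnorm x + vnorm y.
Proof.
  pose proof (vnorm_nonneg x); pose proof (vnorm_nonneg y).
  apply vnorm_le_of_sq; [lra|].
  rewrite <- (vscal_1 y), inner_expand, vscal_1. unfold Defs.C1; simpl.
  pose proof (cauchy_schwarz x y). pose proof (Rle_abs (fst (inner x y))).
  pose proof (proj1 (Cmod_bounds_parts (inner x y))).
  rewrite <- !vnorm_sq. nra.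
Qed.

Lemma vnorm_scal s x : vnorm (vscal s x) = Cmod s * vnorm x.
Proof.
  unfold vnorm, Cmod. rewrite <- sqrt_mult; [|nra|apply inner_pos]. f_equal.
  rewrite inner_scal_l, inner_scal_r. pose proof (inner_diag_real x).
  destruct s, (inner x x); simpl in *; subst. ring.
Qed.

Lemma vnorm_opp x : vnorm (vopp x) = vnorm x.
Proof. rewrite vopp_scal, vnorm_scal, Cmod_real, Rabs_left by lra. ring. Qed.

Lemma vnorm_sub_sym x y : vnorm (vsub x y) = vnorm (vsub y x).
Proof. now rewrite (vsub_anti x y), vnorm_opp. Qed.

Lemma vnorm_sub_triangle x y z : vnorm (vsub x z) <= vnorm (vsub x y) + vnorm (vsub y z).
Proof. rewrite <- (vsub_add x y z). apply vnorm_triangle. Qed.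

Lemma vnorm_le_sub x y : vnorm x <= vnorm (vsub x y) + vnorm y.
Proof. pose proof (vnorm_sub_triangle x y vzero) as E. now rewrite !vsub_0 in E. Qed.

End Hilbert_space.

Section Operators.
Context {H : Hilbert}.
Implicit Types x y : H.

Lemma linear_op_sub (T : H -> H) x y : linear_op T -> T (vsub x y) = vsub (T x) (T y).
Proof. intros [Hadd Hscal]. unfold vsub. now rewrite Hadd, !vopp_scal, Hscal. Qed.

Lemma norm_bound_nonneg (U : H -> H) :
  (exists c, forall x, vnorm (U x) <= c * vnorm x) ->
  exists K, 0 <= K /\ forall x, vnorm (U x) <= K * vnorm x.
Proof.
  intros [c Hc]. exists (Rmax c 0). split; [apply Rmax_r|].
  intros x. pose proof (Hc x). pose proof (vnorm_nonneg x). pose proof (Rmax_l c 0). nra.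
Qed.

Lemma opnorm_nonneg (U : H -> H) : 0 <= opnorm U.
Proof. apply Rsup_nonneg. intros r [z [_ ->]]. apply vnorm_nonneg. Qed.

Lemma opnorm_ge (U : H -> H) x : (exists c, forall x, vnorm (U x) <= c * vnorm x) ->
  vnorm x <= 1 -> vnorm (U x) <= opnorm U.
Proof.
  intros Hc Hx. destruct (norm_bound_nonneg U Hc) as [K [HK HUK]].
  apply Rsup_ge; [now exists x|].
  exists K. intros r [z [Hz ->]]. pose proof (HUK z). pose proof (vnorm_nonneg z). nra.
Qed.

Lemma op_sub_norm_bounded (U V : H -> H) : bounded_op U -> bounded_op V ->
  exists c, forall x, vnorm (op_sub U V x) <= c * vnorm x.
Proof.
  intros [_ HU] [_ HV]. destruct (norm_bound_nonneg U HU) as [a [_ Ha]].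
  destruct (norm_bound_nonneg V HV) as [b [_ Hb]]. exists (a + b). intros x.
  eapply Rle_trans; [apply vnorm_triangle|]. rewrite vnorm_opp.
  pose proof (Ha x); pose proof (Hb x). lra.
Qed.

Definition normalize (y : H) : H := vscal (/ vnorm y, 0) y.

Lemma vnorm_normalize y : y <> vzero -> vnorm (normalize y) = 1.
Proof.
  intros Hy. pose proof (vnorm_gt0 y Hy). unfold normalize.
  rewrite vnorm_scal, Cmod_real, Rabs_right; [field; lra|].
  left. apply Rinv_0_lt_compat. lra.
Qed.

Lemma vnorm_sub_normalize y : 0 < vnorm y -> vnorm (vsub y (normalize y)) = Rabs (vnorm y - 1).
Proof.
  intros Hs. unfold normalize. rewrite <- (vscal_1 y) at 1. rewrite <- vscal_subl, vnorm_scal.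
  replace (Csub Defs.C1 (/ vnorm y, 0)) with ((vnorm y - 1) * / vnorm y, 0)
    by (unfold Csub, Cadd, Copp, Defs.C1; simpl; f_equal; field; lra).
  rewrite Cmod_real, Rabs_mult, (Rabs_right (/ vnorm y)); [field; lra|].
  left. apply Rinv_0_lt_compat. lra.
Qed.

Lemma vnorm_sub_normalize_le x y : 0 < vnorm y ->
  vnorm (vsub x (normalize y)) <= vnorm (vsub x y) + Rabs (vnorm y - 1).
Proof.
  intros Hy. rewrite <- (vnorm_sub_normalize y Hy). apply vnorm_sub_triangle.
Qed.

Lemma opnorm_bound (U : H -> H) x : bounded_op U -> vnorm (U x) <= opnorm U * vnorm x.
Proof.
  intros [Hl Hc]. destruct (classic (x = vzero)) as [->|Hx].
  - destruct (norm_bound_nonneg U Hc) as [K [_ HK]].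
    pose proof (HK vzero). rewrite vnorm_0, Rmult_0_r in *. lra.
  - pose proof (vnorm_gt0 x Hx).
    pose proof (opnorm_ge U _ Hc (Req_le _ _ (vnorm_normalize x Hx))) as Hn.
    unfold normalize in Hn. rewrite (proj2 Hl), vnorm_scal, Cmod_real, Rabs_right in Hn.
    2: { left; apply Rinv_0_lt_compat; lra. }
    apply Rmult_le_reg_l with (/ vnorm x); [apply Rinv_0_lt_compat; lra|].
    replace (/ vnorm x * (opnorm U * vnorm x)) with (opnorm U) by (field; lra). lra.
Qed.

Lemma quad_form_sub (T : H -> H) x y : bounded_op T ->
  Cmod (Csub (inner (T x) x) (inner (T y) y)) <= opnorm T * vnorm (vsub x y) * (vnorm x + vnorm y).
Proof.
  intros HT.
  replace (Csub (inner (T x) x) (inner (T y) y))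
    with (Cadd (inner (T (vsub x y)) x) (inner (T y) (vsub x y))).
  2: { rewrite linear_op_sub, inner_sub_l, inner_sub_r by apply HT.
       destruct (inner (T x) x), (inner (T y) x), (inner (T y) y).
       unfold Csub, Cadd, Copp; simpl; f_equal; ring. }
  eapply Rle_trans; [apply Cmod_triangle|].
  pose proof (cauchy_schwarz (T (vsub x y)) x). pose proof (cauchy_schwarz (T y) (vsub x y)).
  pose proof (opnorm_bound T (vsub x y) HT). pose proof (opnorm_bound T y HT).
  pose proof (vnorm_nonneg x); pose proof (vnorm_nonneg y); pose proof (vnorm_nonneg (vsub x y)).
  pose proof (vnorm_nonneg (T y)); pose proof (vnorm_nonneg (T (vsub x y))).
  pose proof (opnorm_nonneg T). nra.
Qed.

Lemma numrange_bound (T : H -> H) w : bounded_op T -> numrange T w -> Cmod w <= opnorm T.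
Proof.
  intros HT [x [Hx ->]]. eapply Rle_trans; [apply cauchy_schwarz|].
  pose proof (opnorm_bound T x HT). rewrite Hx in *. lra.
Qed.

Lemma numrange_on_mono (M M' : H -> Prop) (T : H -> H) a :
  (forall x, M x -> M' x) -> numrange_on M T a -> numrange_on M' T a.
Proof. intros HM [x [HMx Hx]]. exists x. auto. Qed.

Lemma numrange_on_sub (M : H -> Prop) (T : H -> H) a : numrange_on M T a -> numrange T a.
Proof. intros [x [_ Hx]]. now exists x. Qed.

Lemma numrange_on_approx (M M' : H -> Prop) (T : H -> H) r : bounded_op T ->
  (forall x, M x -> vnorm x = 1 -> exists y, M' y /\ vnorm y = 1 /\ vnorm (vsub x y) <= r) ->
  forall a, numrange_on M T a ->
  exists b, numrange_on M' T b /\ Cmod (Csub a b) <= 2 * opnorm T * r.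
Proof.
  intros HT Hnear a [x [HMx [Hx ->]]].
  destruct (Hnear x HMx Hx) as [y [HMy [Hy Hxy]]].
  exists (inner (T y) y). split; [now exists y|].
  eapply Rle_trans; [apply quad_form_sub; auto|]. rewrite Hx, Hy.
  pose proof (opnorm_nonneg T). nra.
Qed.

Lemma numrange_on_ext (M : H -> Prop) (A B : H -> H) a :
  (forall x, M x -> inner (A x) x = inner (B x) x) ->
  numrange_on M A a <-> numrange_on M B a.
Proof.
  intros E. split; intros [x [HMx [Hx ->]]]; exists x; rewrite ?E; auto.
Qed.

Lemma orth_proj_range_fix (P : H -> H) x : orth_proj P -> range P x -> P x = x.
Proof. intros [_ [Hidem _]] [z ->]. apply Hidem. Qed.

Lemma orth_proj_compress (P : H -> H) x y : orth_proj P -> P x = x ->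
  inner (P y) x = inner y x.
Proof. intros [_ [_ Hsa]] Hx. now rewrite Hsa, Hx. Qed.

(* Because [<Qx, x> = <Qx, Qx>]. *)
Lemma orth_proj_pythagoras (Q : H -> H) x : orth_proj Q ->
  vnorm (vsub x (Q x)) * vnorm (vsub x (Q x)) = vnorm x * vnorm x - vnorm (Q x) * vnorm (Q x).
Proof.
  intros [_ [Hidem Hsa]]. rewrite !vnorm_sq.
  assert (E1 : inner (Q x) (Q x) = inner x (Q x)) by now rewrite Hsa, Hidem.
  assert (E2 : inner (Q x) x = inner x (Q x)) by now rewrite Hsa.
  rewrite inner_sub_l, !inner_sub_r, E1, E2.
  destruct (inner x x), (inner x (Q x)). unfold Csub, Cadd, Copp; simpl. ring.
Qed.

End Operators.

Lemma closure_incl (A : Defs.C -> Prop) a : A a -> closure A a.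
Proof. intros Ha eps He. exists a. split; auto. rewrite Cmod_sub_diag. lra. Qed.

Lemma closure_mono (A B : Defs.C -> Prop) :
  (forall a, A a -> B a) -> forall z, closure A z -> closure B z.
Proof. intros HAB z Hz eps He. destruct (Hz eps He) as [a [Ha Hd]]. exists a; auto. Qed.

Lemma dist_pt_set_nonneg z B : 0 <= dist_pt_set z B.
Proof. apply Rinf_nonneg. intros x [b [_ ->]]. apply Cmod_nonneg. Qed.

Lemma hausdorff_nonneg A B : 0 <= hausdorff A B.
Proof.
  eapply Rle_trans; [|apply Rmax_l].
  apply Rsup_nonneg. intros x [a [_ ->]]. apply dist_pt_set_nonneg.
Qed.

Lemma excess_closure_le (A B : Defs.C -> Prop) K : 0 <= K ->
  (forall a, A a -> exists b, B b /\ Cmod (Csub a b) <= K) ->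
  Rsup (fun r => exists a, closure A a /\ r = dist_pt_set a (closure B)) <= K.
Proof.
  intros HK HAB. apply Rsup_le; auto. intros r [a [Ha ->]].
  apply Rnot_lt_le. intros Hlt.
  destruct (Ha (dist_pt_set a (closure B) - K)) as [a' [Ha' Hd]]; [lra|].
  destruct (HAB a' Ha') as [b [Hb Hd']].
  assert (dist_pt_set a (closure B) <= Cmod (Csub a b)).
  { apply Rinf_le; [exists b; split; auto; now apply closure_incl|].
    intros x [b0 [_ ->]]. apply Cmod_nonneg. }
  pose proof (Cmod_sub_triangle a a' b). lra.
Qed.

Lemma hausdorff_closure_le (A B : Defs.C -> Prop) K : 0 <= K ->
  (forall a, A a -> exists b, B b /\ Cmod (Csub a b) <= K) ->
  (forall b, B b -> exists a, A a /\ Cmod (Csub b a) <= K) ->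
  hausdorff (closure A) (closure B) <= K.
Proof. intros. apply Rmax_lub; now apply excess_closure_le. Qed.

Lemma closure_union_iff (A : nat -> Defs.C -> Prop) (B : Defs.C -> Prop) :
  (forall n a, A n a -> B a) ->
  (forall b eps, B b -> eps > 0 -> exists n a, A n a /\ Cmod (Csub b a) < eps) ->
  forall z, closure B z <-> closure (fun a => exists n, A n a) z.
Proof.
  intros Hsub Happrox z. split.
  - intros Hz eps He. destruct (Hz (eps / 2)) as [b [Hb Hzb]]; [lra|].
    destruct (Happrox b (eps / 2) Hb) as [n [a [Ha Hba]]]; [lra|].
    exists a. split; [now exists n|]. pose proof (Cmod_sub_triangle z b a). lra.
  - apply closure_mono. intros a [n Ha]. now apply (Hsub n).
Qed.

Lemma grid_cover (K h : R) : 0 < h -> forall k r, -K <= r <= -K + INR k * h ->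
  exists i, (i <= k)%nat /\ Rabs (r - (-K + INR i * h)) <= h.
Proof.
  intros Hh k. induction k as [|k IH]; intros r Hr.
  - exists 0%nat. split; auto. simpl in *. apply Rabs_le. lra.
  - destruct (Rle_dec r (-K + INR k * h)).
    + destruct (IH r ltac:(lra)) as [i [Hi Hd]]. exists i. split; auto.
    + exists (S k). split; auto. rewrite S_INR in *. apply Rabs_le. lra.
Qed.

Lemma interval_net (K h : R) : 0 <= K -> 0 < h -> exists L : nat, forall r, -K <= r <= K ->
  exists i, (i <= L)%nat /\ Rabs (r - (-K + INR i * h)) <= h.
Proof.
  intros HK Hh. destruct (INR_unbounded (2 * K / h)) as [L HL]. exists L.
  intros r Hr. apply grid_cover; auto.
  apply Rmult_lt_compat_r with (r := h) in HL; auto.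
  replace (2 * K / h * h) with (2 * K) in HL by (field; lra). lra.
Qed.

(* The grid [{-K + i h : i <= L}^2] is a finite [2h]-net of the disc of radius [K]. *)
Lemma disc_finite_net (K h : R) : 0 <= K -> 0 < h -> exists l : list Defs.C,
  forall z, Cmod z <= K -> exists p, In p l /\ Cmod (Csub z p) <= 2 * h.
Proof.
  intros HK Hh. destruct (interval_net K h HK Hh) as [L HL].
  set (idx := seq 0 (S L)).
  exists (map (fun ij => (-K + INR (fst ij) * h, -K + INR (snd ij) * h)) (list_prod idx idx)).
  intros z Hz. destruct (Cmod_bounds_parts z) as [Hre Him].
  destruct (HL (fst z)) as [i [Hi Hdi]]; [apply abs_le_inv; lra|].
  destruct (HL (snd z)) as [j [Hj Hdj]]; [apply abs_le_inv; lra|].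
  exists (-K + INR i * h, -K + INR j * h). split.
  - apply in_map_iff. exists (i, j). split; auto.
    apply in_prod; apply in_seq; lia.
  - eapply Rle_trans; [apply Cmod_le_parts|].
    destruct z as [z1 z2]. unfold Csub, Cadd, Copp; simpl in *.
    replace (z1 + - (- K + INR i * h)) with (z1 - (- K + INR i * h)) by ring.
    replace (z2 + - (- K + INR j * h)) with (z2 - (- K + INR j * h)) by ring. lra.
Qed.

Lemma eventually_Forall {X : Type} (Q : X -> nat -> Prop) (l : list X) :
  (forall p, In p l -> exists N, forall n, (n >= N)%nat -> Q p n) ->
  exists N, forall p, In p l -> forall n, (n >= N)%nat -> Q p n.
Proof.
  induction l as [|p l IH]; intros Hl.
  - exists 0%nat. intros p [].
  - destruct (Hl p (in_eq p l)) as [N1 HN1].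
    destruct IH as [N2 HN2]; [intros q Hq; apply Hl; now right|].
    exists (Nat.max N1 N2). intros q [<-|Hq] n Hn.
    + apply HN1. lia.
    + apply HN2; auto. lia.
Qed.

(* Only finitely many points of a finite net have to be approximated, which makes the
   approximation uniform in [n]. *)
Lemma hausdorff_increasing_cvg (A : nat -> Defs.C -> Prop) (B : Defs.C -> Prop) K :
  (forall n a, A n a -> A (S n) a) -> (forall n a, A n a -> B a) ->
  (forall b, B b -> Cmod b <= K) ->
  (forall b eps, B b -> eps > 0 -> exists n a, A n a /\ Cmod (Csub b a) < eps) ->
  Un_cv (fun n => hausdorff (closure (A n)) (closure B)) 0.
Proof.
  intros Hmono Hsub Hbound Happrox eps He.
  assert (Hmono' : forall n m a, (n <= m)%nat -> A n a -> A m a).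
  { intros n m a Hnm Ha. induction Hnm; auto. }
  set (h := eps / 8). assert (Hh : 0 < h) by (unfold h; lra).
  destruct (disc_finite_net (Rmax K 0) h (Rmax_r K 0) Hh) as [l Hnet].
  set (Q := fun p n => (exists b, B b /\ Cmod (Csub b p) <= 2 * h) ->
                       exists a, A n a /\ Cmod (Csub p a) <= 3 * h).
  destruct (eventually_Forall Q l) as [N HN].
  { intros p _. destruct (classic (exists b, B b /\ Cmod (Csub b p) <= 2 * h))
      as [[b [Hb Hbp]]|Hnone].
    - destruct (Happrox b h Hb Hh) as [n0 [a [Ha Hba]]].
      exists n0. intros n Hn _. exists a. split; [now apply (Hmono' n0)|].
      rewrite Cmod_sub_sym in Hbp. pose proof (Cmod_sub_triangle p b a). lra.
    - exists 0%nat. intros n _ Hsome. contradiction. }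
  exists N. intros n Hn. unfold R_dist.
  rewrite Rminus_0_r, Rabs_right by apply Rle_ge, hausdorff_nonneg.
  apply Rle_lt_trans with (5 * h); [|unfold h; lra].
  apply hausdorff_closure_le; [lra| |].
  - intros a Ha. exists a. split; [now apply (Hsub n)|]. rewrite Cmod_sub_diag. lra.
  - intros b Hb. destruct (Hnet b) as [p [Hp Hbp]].
    { pose proof (Hbound b Hb). pose proof (Rmax_l K 0). lra. }
    destruct (HN p Hp n Hn) as [a [Ha Hpa]]; [now exists b|].
    exists a. split; auto. pose proof (Cmod_sub_triangle b p a). lra.
Qed.

Section Numerical_ranges.
Context {H : Hilbert}.

Lemma hausdorff_numrange_le_opnorm_sub (T S : H -> H) : bounded_op T -> bounded_op S ->
  hausdorff (closure (numrange T)) (closure (numrange S)) <= opnorm (op_sub T S).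
Proof.
  intros HT HS.
  assert (Hpt : forall x, vnorm x = 1 ->
            Cmod (Csub (inner (T x) x) (inner (S x) x)) <= opnorm (op_sub T S)).
  { intros x Hx. rewrite <- inner_sub_l. eapply Rle_trans; [apply cauchy_schwarz|].
    rewrite Hx, Rmult_1_r.
    apply (opnorm_ge (op_sub T S) x); [now apply op_sub_norm_bounded | lra]. }
  apply hausdorff_closure_le; [apply opnorm_nonneg| |].
  - intros a [x [Hx ->]]. exists (inner (S x) x). split; [now exists x|]. now apply Hpt.
  - intros b [x [Hx ->]]. exists (inner (T x) x). split; [now exists x|].
    rewrite Cmod_sub_sym. now apply Hpt.
Qed.

Lemma numrange_on_proj_onto (M : H -> Prop) (P T : H -> H) a : orth_proj_onto M P ->
  numrange_on M (fun x => P (T x)) a <-> numrange_on M T a.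
Proof.
  intros [HP Hrange]. apply numrange_on_ext. intros x Hx.
  apply orth_proj_compress; auto. apply orth_proj_range_fix; auto. now apply Hrange.
Qed.

Lemma numrange_on_compression (P T : H -> H) a : orth_proj P ->
  numrange_on (range P) (fun x => P (T (P x))) a <-> numrange_on (range P) T a.
Proof.
  intros HP. apply numrange_on_ext. intros x Hx.
  pose proof (orth_proj_range_fix P x HP Hx) as HPx.
  rewrite orth_proj_compress, HPx; auto.
Qed.

Lemma numrange_approx_subspaces (M : nat -> H -> Prop) (T : H -> H) : bounded_op T ->
  (forall n, closed_subspace (M n)) ->
  (forall (x : H) eps, eps > 0 -> exists n y, M n y /\ vnorm (vsub x y) < eps) ->
  forall w eps, numrange T w -> eps > 0 ->
  exists n a, numrange_on (M n) T a /\ Cmod (Csub w a) < eps.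
Proof.
  intros HT Hsub Hdense w eps [x [Hx ->]] He.
  pose proof (opnorm_nonneg T) as HK. set (K := opnorm T) in *.
  destruct (small_radius K eps HK He) as [rho [[Hrho Hrho_half] Hrho_eps]].
  destruct (Hdense x rho Hrho) as [n [y [Hy Hxy]]].
  pose proof (vnorm_le_sub x y). pose proof (vnorm_le_sub y x). pose proof (vnorm_sub_sym x y).
  assert (Hny : Rabs (vnorm y - 1) <= vnorm (vsub x y)) by (apply Rabs_le; split; lra).
  assert (Hy0 : 0 < vnorm y) by (apply abs_le_inv in Hny; lra).
  assert (Hy_nz : y <> vzero) by (intros ->; rewrite vnorm_0 in Hy0; lra).
  exists n, (inner (T (normalize y)) (normalize y)). split.
  - exists (normalize y). repeat split; [|now apply vnorm_normalize].
    destruct (Hsub n) as [_ [_ [Hscal _]]]. now apply Hscal.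
  - pose proof (vnorm_sub_normalize_le x y Hy0) as Hxy'.
    eapply Rle_lt_trans; [apply quad_form_sub; auto|].
    rewrite Hx, vnorm_normalize by auto. fold K. nra.
Qed.

Lemma unit_range_near (P Q : H -> H) d : orth_proj P -> orth_proj Q -> d < 1 ->
  (forall x, vnorm x <= 1 -> vnorm (vsub (P x) (Q x)) <= d) ->
  forall x, range P x -> vnorm x = 1 ->
  exists y, range Q y /\ vnorm y = 1 /\ vnorm (vsub x y) <= d + d * d.
Proof.
  intros HP HQ Hd1 Hd x HPx Hx.
  pose proof (orth_proj_range_fix P x HP HPx) as Px.
  assert (Hxd : vnorm (vsub x (Q x)) <= d) by (rewrite <- Px at 1; apply Hd; lra).
  pose proof (orth_proj_pythagoras Q x HQ) as Hpyth. rewrite Hx in Hpyth.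
  pose proof (vnorm_nonneg (vsub x (Q x))). pose proof (vnorm_nonneg (Q x)).
  assert (Hs0 : 0 < vnorm (Q x)) by nra.
  assert (HQx : Q x <> vzero) by (intros E; rewrite E, vnorm_0 in Hs0; lra).
  exists (normalize (Q x)). repeat split.
  - destruct HQ as [[[_ Hscal] _] [Hidem _]].
    exists (normalize (Q x)). unfold normalize. now rewrite Hscal, Hidem.
  - now apply vnorm_normalize.
  - eapply Rle_trans; [now apply vnorm_sub_normalize_le|].
    rewrite Rabs_left1 by nra. nra.
Qed.

Lemma hausdorff_compression_le (T P Q : H -> H) : bounded_op T -> orth_proj P -> orth_proj Q ->
  opnorm (op_sub P Q) < 1 ->
  hausdorff (closure (numrange_on (range P) (fun x => P (T (P x)))))
            (closure (numrange_on (range Q) (fun x => Q (T (Q x)))))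
  <= 2 * opnorm T * (opnorm (op_sub P Q) + opnorm (op_sub P Q) * opnorm (op_sub P Q)).
Proof.
  intros HT HP HQ Hd1. set (d := opnorm (op_sub P Q)) in *.
  pose proof (opnorm_nonneg (op_sub P Q)) as Hd0. fold d in Hd0.
  assert (Hd : forall x, vnorm x <= 1 -> vnorm (vsub (P x) (Q x)) <= d).
  { intros x Hx. apply (opnorm_ge (op_sub P Q) x); auto.
    apply op_sub_norm_bounded; [apply HP | apply HQ]. }
  pose proof (opnorm_nonneg T).
  apply hausdorff_closure_le; [nra| |].
  - intros a Ha. apply (numrange_on_compression P T a HP) in Ha.
    destruct (numrange_on_approx _ _ T _ HT (unit_range_near P Q d HP HQ Hd1 Hd) a Ha)
      as [b [Hb Hab]].
    exists b. split; auto. now apply numrange_on_compression.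
  - intros b Hb. apply (numrange_on_compression Q T b HQ) in Hb.
    assert (Hd' : forall x, vnorm x <= 1 -> vnorm (vsub (Q x) (P x)) <= d).
    { intros x Hx. rewrite vnorm_sub_sym. auto. }
    destruct (numrange_on_approx _ _ T _ HT (unit_range_near Q P d HQ HP Hd1 Hd') b Hb)
      as [a [Ha Hba]].
    exists a. split; auto. now apply numrange_on_compression.
Qed.

End Numerical_ranges.

Lemma two_mul_add_sq_le (d : R) : 0 <= d < 1 -> 2 * (d + d * d) <= d * (1 + 2 / (1 - d) ^ 2).
Proof.
  intros Hd. assert (Hu : 0 < (1 - d) ^ 2) by (apply pow_lt; lra).
  assert (Ht : 2 / (1 - d) ^ 2 * (1 - d) ^ 2 = 2) by (field; lra).
  assert (1 + 2 * d <= 2 / (1 - d) ^ 2).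
  { apply Rmult_le_reg_r with ((1 - d) ^ 2); auto. rewrite Ht. simpl. nra. }
  nra.
Qed.

Lemma Un_cv_hausdorff_compression {H : Hilbert} (T P : H -> H) (Pn : nat -> H -> H) :
  bounded_op T -> orth_proj P -> (forall n, orth_proj (Pn n)) ->
  Un_cv (fun n => opnorm (op_sub (Pn n) P)) 0 ->
  Un_cv (fun n => hausdorff
           (closure (numrange_on (range (Pn n)) (fun x => Pn n (T (Pn n x)))))
           (closure (numrange_on (range P) (fun x => P (T (P x)))))) 0.
Proof.
  intros HT HP HPn Hcv eps He.
  pose proof (opnorm_nonneg T) as HK. set (K := opnorm T) in *.
  destruct (small_radius K eps HK He) as [r [[Hr Hr_half] Hr_eps]].
  destruct (Hcv r Hr) as [N HN]. exists N. intros n Hn. specialize (HN n Hn).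
  unfold R_dist in *. rewrite Rminus_0_r in *.
  pose proof (opnorm_nonneg (op_sub (Pn n) P)) as Hd0.
  set (d := opnorm (op_sub (Pn n) P)) in *. rewrite Rabs_right in HN by lra.
  assert (Hd1 : d < 1) by lra.
  pose proof (hausdorff_compression_le T (Pn n) P HT (HPn n) HP Hd1) as Hb.
  fold K d in Hb. rewrite Rabs_right by apply Rle_ge, hausdorff_nonneg.
  assert (d + d * d <= 3 / 2 * r) by nra.
  assert (2 * K * (d + d * d) <= 3 * K * r) by nra. lra.
Qed.

(* The nonemptiness hypotheses are not needed: all bounds are proved pointwise, and
   [hausdorff] of empty sets is the junk value [0]. *)
Theorem lemma4p4 : forall H : Hilbert,
  ((exists x : H, x <> vzero) ->
   forall T S : H -> H, bounded_op T -> bounded_op S ->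
     hausdorff (closure (numrange T)) (closure (numrange S)) <= opnorm (op_sub T S))
  /\
  (forall (Hn : nat -> H -> Prop) (Pn : nat -> H -> H),
     (forall n, closed_subspace (Hn n)) ->
     (forall n, nonzero_subspace (Hn n)) ->
     (forall n x, Hn n x -> Hn (S n) x) ->
     (forall (x : H) eps, eps > 0 -> exists n y, Hn n y /\ vnorm (vsub x y) < eps) ->
     (forall n, orth_proj_onto (Hn n) (Pn n)) ->
     forall T : H -> H, bounded_op T ->
       (forall z, closure (numrange T) z <->
          closure (fun w => exists n, numrange_on (Hn n) (fun x => Pn n (T x)) w) z)
       /\
       Un_cv (fun n => hausdorff (closure (numrange_on (Hn n) (fun x => Pn n (T x))))
                                 (closure (numrange T))) 0)
  /\
  (forall T P Q : H -> H, bounded_op T ->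
     orth_proj P -> orth_proj Q -> nonzero_op P -> nonzero_op Q ->
     opnorm (op_sub P Q) < 1 ->
     hausdorff (closure (numrange_on (range P) (fun x => P (T (P x)))))
               (closure (numrange_on (range Q) (fun x => Q (T (Q x)))))
     <= opnorm T * opnorm (op_sub P Q) * (1 + 2 / (1 - opnorm (op_sub P Q)) ^ 2))
  /\
  (forall (T P : H -> H) (Pn : nat -> H -> H), bounded_op T ->
     orth_proj P -> nonzero_op P ->
     (forall n, orth_proj (Pn n)) -> (forall n, nonzero_op (Pn n)) ->
     Un_cv (fun n => opnorm (op_sub (Pn n) P)) 0 ->
     Un_cv (fun n => hausdorff
              (closure (numrange_on (range (Pn n)) (fun x => Pn n (T (Pn n x)))))
              (closure (numrange_on (range P) (fun x => P (T (P x)))))) 0).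
Proof.
  intros H. split; [|split; [|split]].
  - intros _ T S HT HS. now apply hausdorff_numrange_le_opnorm_sub.
  - intros Hn Pn Hcl _ Hmono Hdense Hproj T HT.
    set (A n := numrange_on (Hn n) (fun x => Pn n (T x))).
    assert (HA : forall n a, A n a <-> numrange_on (Hn n) T a)
      by (intros n a; apply numrange_on_proj_onto, Hproj).
    assert (Hsub : forall n a, A n a -> numrange T a)
      by (intros n a Ha; apply HA in Ha; now apply numrange_on_sub in Ha).
    assert (Happrox : forall w eps, numrange T w -> eps > 0 ->
              exists n a, A n a /\ Cmod (Csub w a) < eps).
    { intros w eps Hw He.
      destruct (numrange_approx_subspaces Hn T HT Hcl Hdense w eps Hw He) as [n [a [Ha Hwa]]].
      exists n, a. split; auto. now apply HA. }
    split.
    + now apply closure_union_iff.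
    + apply (hausdorff_increasing_cvg A _ (opnorm T)); auto.
      * intros n a Ha. apply HA. apply HA in Ha. exact (numrange_on_mono _ _ T a (Hmono n) Ha).
      * intros b Hb. now apply numrange_bound.
  - intros T P Q HT HP HQ _ _ Hd.
    pose proof (opnorm_nonneg T). pose proof (opnorm_nonneg (op_sub P Q)).
    pose proof (two_mul_add_sq_le (opnorm (op_sub P Q)) ltac:(lra)).
    eapply Rle_trans; [now apply hausdorff_compression_le|]. nra.
  - intros T P Pn HT HP _ HPn _ Hcv. now apply Un_cv_hausdorff_compression.
Qed.
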